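(* Let $m$ be a positive integer and let $Y \subseteq \mathbb{P}(\mathbb{C}^2\otimes\mathbb{C}^2\otimes\mathbb{C}^{m+1})$ be the Segre variety, i.e. the image of $\mathbb{P}(\mathbb{C}^2)\times\mathbb{P}(\mathbb{C}^2)\times\mathbb{P}(\mathbb{C}^{m+1}) \to \mathbb{P}(\mathbb{C}^2\otimes\mathbb{C}^2\otimes\mathbb{C}^{m+1})$, $[u]\times[v]\times[w]\mapsto[u\otimes v\otimes w]$. There exists a linear subspace $L \subseteq \mathbb{P}(\mathbb{C}^2\otimes\mathbb{C}^2\otimes\mathbb{C}^{m+1})$ of codimension $2m+5$ with $L \cap \sigma_2^\circ(Y) = \emptyset$ such that \[L \cap \sigma_2(Y) = L_1 \sqcup L_2,\] where $L_1, L_2 \subseteq \sigma_2(Y)\setminus\sigma_2^\circ(Y)$ are disjoint linear subspaces spanning $L$.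
   Context: For a subvariety $Y \subseteq \mathbb{P}(V)$, the secant locus is $\sigma_2^\circ(Y) := \bigcup_{p,q \in Y}\langle p,q\rangle$, where $\langle p,q\rangle$ is the linear span of $p$ and $q$ (so $\langle p,p\rangle = \{p\}$); the secant variety $\sigma_2(Y)$ is its Zariski closure. *)

From HB Require Import structures.
From mathcomp Require Import all_boot all_order all_algebra.
From mathcomp Require Import complex.
From mathcomp Require Import Rstruct.
From mathcomp Require mpoly.
From Stdlib Require Reals.

Set Implicit Arguments.
Unset Strict Implicit.
Unset Printing Implicit Defensive.
Import Order.TTheory GRing.Theory Num.Theory.
Local Open Scope ring_scope.

Notation CC := (complex Rdefinitions.R).

Definition tidx (m : nat) : finType := ('I_2 * 'I_2 * 'I_m.+1)%type.

Definition tens (m : nat) := {ffun tidx m -> CC^o}.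

Definition ptensor (m : nat) (u v : 'I_2 -> CC) (w : 'I_m.+1 -> CC) : tens m :=
  [ffun i : tidx m => u i.1.1 * v i.1.2 * w i.2].

(* Projective subsets of P(V) are represented by their affine cones minus 0,
   i.e. predicates on nonzero vectors (stable under nonzero scaling).
   [x] lies in the Segre variety Y iff x is a nonzero pure tensor. *)
Definition segre (m : nat) (x : tens m) : Prop :=
  x != 0 /\ exists u v w, x = ptensor u v w.

Definition sec_locus (m : nat) (x : tens m) : Prop :=
  x != 0 /\ exists p q : tens m, segre p /\ segre q /\
    exists a b : CC, x = a *: p + b *: q.

Definition coords (m : nat) (x : tens m) : 'I_#|tidx m| -> CC :=
  fun i => x (enum_val i).

Definition zclosure (m : nat) (S : tens m -> Prop) (x : tens m) : Prop :=
  x != 0 /\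
  forall (d : nat) (f : mpoly.mpoly #|tidx m| CC),
    f \is mpoly.ishomog1 d (mpoly.mpoly_mdeg__canonical__mpoly_Measure #|tidx m|) ->
    (forall y, S y -> mpoly.meval (coords y) f = 0) ->
    mpoly.meval (coords x) f = 0.

Definition sec_var (m : nat) : tens m -> Prop := zclosure (@sec_locus m).

(* Read vectors of C^(m+1) as coefficient lists of polynomials, so that
   shifting is multiplication by 'X.  W1 consists of the tensors
   c (x) 1 + c 'X (x) E01 with deg c < m, and W2 of the tensors
   d (x) diag(1, -1) + d 'X^2 (x) E10 with deg d < m - 1.  Such a tensor is a
   limit of points on secant lines, hence lies in sigma_2(Y); but its slices at
   the top degree p of c and at p + 1 (resp. p + 2) form a Jordan-type 2x2x2
   tensor, which is not a sum of two pure tensors.  If x = w1 + w2 with both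
   parts nonzero, three of the four lists c, d, c 'X, d 'X^2 have distinct
   degrees, so a 3x3 minor of the flattening C^(m+1)* -> C^2 (x) C^2 does not
   vanish at x; these minors are cubic equations of sigma_2(Y).  Finally
   dim W1 + dim W2 = 2m - 1 = 4(m + 1) - (2m + 5). *)

From HB Require Import structures.
From mathcomp Require Import all_boot all_order all_algebra.
From mathcomp Require Import complex Rstruct.
From mathcomp Require Import perm ring zify.
From mathcomp Require mpoly.
Import mpoly.

Set Implicit Arguments.
Unset Strict Implicit.
Unset Printing Implicit Defensive.
Import GRing.Theory Num.Theory.
Local Open Scope ring_scope.

Section SecantLoci.
Variable m : nat.
Implicit Types (x : tens m) (s t : CC) (c e : {poly CC}).

Lemma sec_locus_sec_var x : sec_locus x -> sec_var x.
Proof. by move=> sx; split=> [|d f _ /(_ x sx)]; [case: sx|]. Qed.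

Lemma sec_locus_pure2 x a b u v w u' v' w' : x != 0 ->
  x = a *: ptensor u v w + b *: ptensor u' v' w' -> sec_locus x.
Proof.
move=> nx ex; split=> //.
have segreP (u1 v1 : 'I_2 -> CC) w1 : ptensor u1 v1 w1 != 0 -> segre (ptensor u1 v1 w1).
  by move=> nz; split=> //; exists u1, v1, w1.
have [p0|p0] := eqVneq (ptensor u v w) 0; have [q0|q0] := eqVneq (ptensor u' v' w') 0.
- by case/eqP: nx; rewrite ex p0 q0 !scaler0 addr0.
- exists (ptensor u' v' w'), (ptensor u' v' w').
  split; [exact: segreP | split; [exact: segreP | exists 0, b]].
  by rewrite ex p0 scaler0 scale0r.
- exists (ptensor u v w), (ptensor u v w).
  split; [exact: segreP | split; [exact: segreP | exists a, 0]].
  by rewrite ex q0 scaler0 scale0r.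
exists (ptensor u v w), (ptensor u' v' w').
by split; [exact: segreP | split; [exact: segreP | exists a, b]].
Qed.

Definition secant_limit x := exists Q : tidx m -> {poly CC},
  (forall z, (Q z).[0] = x z) /\ forall t, t != 0 -> sec_locus [ffun z => (Q z).[t]].

(* A homogeneous equation of the secant locus, pulled back along the curve,
   is a polynomial in [t] with infinitely many roots. *)
Lemma sec_var_secant_limit x : x != 0 -> secant_limit x -> sec_var x.
Proof.
move=> nx [Q [Q0 QS]]; split=> // d f _ f_sec.
pose G : {poly CC} := mmap polyC (fun i => Q (enum_val i)) f.
have hornerG t : G.[t] = meval (fun i => (Q (enum_val i)).[t]) f.
  rewrite /G /mmap mevalE horner_sum; apply: eq_bigr => mm _.
  rewrite hornerM hornerC /mmap1 horner_prod; congr (_ * _); apply: eq_bigr => i _.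
  by rewrite horner_exp.
have G0 : G = 0.
  apply/eqP; apply: contraT => nzG.
  have := @max_poly_roots _ G [seq (i.+1)%:R | i <- iota 0 (size G)] nzG.
  rewrite size_map size_iota ltnn; apply.
    apply/allP => t /mapP [i _ ->]; rewrite /root hornerG.
    rewrite -(f_sec [ffun z => (Q z).[i.+1%:R]]); last by apply: QS; rewrite pnatr_eq0.
    by apply/eqP/meval_eq => j; rewrite /coords ffunE.
  by rewrite map_inj_uniq ?iota_uniq // => a b /eqP; rewrite eqr_nat eqSS => /eqP.
have := hornerG 0; rewrite G0 horner0 => ->.
by apply/meval_eq => j; rewrite /coords Q0.
Qed.

Definition swap12 x : tens m := [ffun z : tidx m => x (z.1.2, z.1.1, z.2)].

Lemma swap12K : involutive swap12.
Proof. by move=> x; apply/ffunP => -[[i j] k]; rewrite !ffunE. Qed.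

Fact swap12_is_linear : linear swap12.
Proof. by move=> a x y; apply/ffunP => z; rewrite !ffunE. Qed.

HB.instance Definition _ :=
  GRing.isLinear.Build CC (tens m) (tens m) *:%R swap12 swap12_is_linear.

Lemma sec_locus_swap12 x : sec_locus x -> sec_locus (swap12 x).
Proof.
case=> x_nz [_ [_ [[_ [u [v [w ->]]]] [[_ [u' [v' [w' ->]]]] [a [b ex]]]]]].
apply: (@sec_locus_pure2 _ a b v u w v' u' w').
  by rewrite -(inj_eq (can_inj swap12K)) swap12K raddf0.
by apply/ffunP => -[[i j] k]; rewrite ex !ffunE /= (mulrC (v i)) (mulrC (v' i)).
Qed.

Lemma secant_limit_swap12 x : secant_limit x -> secant_limit (swap12 x).
Proof.
case=> Q [Q0 QS]; exists (fun z => Q (z.1.2, z.1.1, z.2)).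
split=> [z|t tn0]; first by rewrite Q0 ffunE.
suff -> : [ffun z => (Q (z.1.2, z.1.1, z.2)).[t]] = swap12 [ffun z => (Q z).[t]].
  exact/sec_locus_swap12/QS.
by apply/ffunP => z; rewrite !ffunE.
Qed.

Definition contract (w : 'I_2 -> 'I_2 -> CC) x (k : nat) : CC :=
  \sum_(i < 2) \sum_(j < 2) w i j * x (i, j, inord k).

Definition flat_minor (w : 'I_3 -> 'I_2 -> 'I_2 -> CC) (k : 'I_3 -> nat) x :
  'M[CC]_3 := \matrix_(a, b) contract (w a) x (k b).

Lemma det_flat_minor_sec_locus w k x : sec_locus x -> \det (flat_minor w k x) = 0.
Proof.
case=> _ [_ [_ [[_ [u [v [w1 ->]]]] [[_ [u' [v' [w2 ->]]]] [a [b ->]]]]]].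
pose col (u v : 'I_2 -> CC) : 'cV[CC]_3 :=
  \col_i \sum_(i' < 2) \sum_(j' < 2) w i i' j' * (u i' * v j').
pose row a (w : 'I_m.+1 -> CC) : 'rV[CC]_3 := \row_j (a * w (inord (k j))).
have -> : flat_minor w k (a *: ptensor u v w1 + b *: ptensor u' v' w2) =
    row_mx (col u v) (col u' v') *m col_mx (row a w1) (row b w2).
  rewrite mul_row_col; apply/matrixP => i j.
  by rewrite !mxE !big_ord1 !mxE /contract !big_ord_recl !big_ord0 /= !ffunE /GRing.scale /=; ring.
set M := _ *m _.
have : (\rank M <= 2)%N by exact: leq_trans (mxrankM_maxl _ _) (rank_leq_col _).
apply: contraTeq => det_nz.
have : M \in unitmx by rewrite unitmxE unitfE.
by rewrite -row_free_unit => /eqP ->.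
Qed.

Lemma det_flat_minor_sec_var w k x : sec_var x -> \det (flat_minor w k x) = 0.
Proof.
case=> _ x_zero.
pose N := #|tidx m|.
pose A : 'M[{mpoly CC[N]}]_3 := \matrix_(a, b) \sum_(i < 2) \sum_(j < 2)
  w a i j *: 'X_(enum_rank ((i, j, inord (k b)) : tidx m)).
have evalA y : meval (coords y) (\det A) = \det (flat_minor w k y).
  rewrite -det_map_mx; congr (\det _); apply/matrixP => a b; rewrite !mxE.
  rewrite raddf_sum; apply: eq_bigr => i _; rewrite raddf_sum; apply: eq_bigr => j _.
  by rewrite /= mevalZ mevalXU /coords enum_rankK.
rewrite -evalA; apply: (x_zero 3%N); last by move=> y /det_flat_minor_sec_locus; rewrite evalA.
have A_linear a b : A a b \is 1.-homog.
  rewrite mxE; apply: rpred_sum => i _; apply: rpred_sum => j _; apply: rpredZ.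
  by rewrite dhomogX /= mdeg1.
rewrite /determinant; apply: rpred_sum => s _.
rewrite !big_ord_recl big_ord0 mulr1.
have := dhomogM (A_linear _ _) (dhomogM (A_linear _ _) (A_linear _ _)).
by case: (odd_perm s); rewrite ?expr1 ?expr0 ?mulN1r ?mul1r // => h; rewrite rpredN; exact: h.
Qed.

(* Coefficient lists of distinct degrees are linearly independent: the
   corresponding flattening minor is triangular. *)
Lemma not_sec_var_degrees (w0 w1 w2 : 'I_2 -> 'I_2 -> CC) (f0 f1 f2 : {poly CC}) x :
  (forall k, (k <= m)%N ->
    [/\ contract w0 x k = f0`_k, contract w1 x k = f1`_k & contract w2 x k = f2`_k]) ->
  (0 < size f0 < size f1)%N -> (size f1 < size f2 <= m.+1)%N -> ~ sec_var x.
Proof.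
move=> wf /andP[f0_gt0 lt01] /andP[lt12 f2_le].
pose w (a : 'I_3) := match val a with 0 => w0 | 1 => w1 | _ => w2 end.
pose f (a : 'I_3) := match val a with 0 => f0 | 1 => f1 | _ => f2 end.
pose k (a : 'I_3) := (size (f a)).-1.
have s0 : (0 < size f0 <= m.+1)%N by apply/andP; split; lia.
have s1 : (0 < size f1 <= m.+1)%N by apply/andP; split; lia.
have s2 : (0 < size f2 <= m.+1)%N by apply/andP; split; lia.
have lt02 : (size f0 < size f2)%N by lia.
have size_f a : (0 < size (f a) <= m.+1)%N by case: a => [[|[|[|?]]] ?].
have lt_f (a b : 'I_3) : (a < b)%N -> (size (f a) < size (f b))%N.
  by case: a b => [[|[|[|?]]] ?] [[|[|[|?]]] ?].
have entry a b : flat_minor w k x a b = (f a)`_(k b).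
  have /wf[] : (k b <= m)%N by case/andP: (size_f b); rewrite /k; lia.
  by rewrite mxE; case: a => [[|[|[|?]]] ?].
move/(det_flat_minor_sec_var w k)/eqP; apply/negP.
rewrite det_trig; last first.
  apply/is_trig_mxP => a b /lt_f lt_ab; by rewrite entry nth_default // /k -ltnS (ltn_predK lt_ab).
apply/prodf_neq0 => a _; rewrite entry -lead_coefE lead_coef_eq0.
by rewrite -size_poly_gt0; case/andP: (size_f a).
Qed.

(* For slices of shape [[a, b], [0, s a]] the determinant of the pencil
   X_k + t X_l is [s (a_k + t a_l)^2], while a decomposition into two pure
   tensors writes it as [D (P_k + t P_l) (Q_k + t Q_l)] (Cauchy-Binet).
   Comparing coefficients gives [((P_k Q_l - P_l Q_k) D)^2 = 0]. *)
Lemma rank2_jordan_slices s x a b u v w u' v' w' (k l : 'I_m.+1) :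
  x = a *: ptensor u v w + b *: ptensor u' v' w' -> s != 0 ->
  x (ord_max, ord0, k) = 0 -> x (ord_max, ord_max, k) = s * x (ord0, ord0, k) ->
  x (ord_max, ord0, l) = 0 -> x (ord_max, ord_max, l) = s * x (ord0, ord0, l) ->
  x (ord0, ord0, k) * x (ord0, ord_max, l) = x (ord0, ord0, l) * x (ord0, ord_max, k).
Proof.
move=> ex s_nz x10k x11k x10l x11l.
have E i j r : x (i, j, r) = u i * v j * (a * w r) + u' i * v' j * (b * w' r).
  by rewrite ex !ffunE /GRing.scale /=; ring.
pose D := u ord0 * v ord0 * (u' ord_max * v' ord_max)
  + u' ord0 * v' ord0 * (u ord_max * v ord_max)
  - u ord0 * v ord_max * (u' ord_max * v' ord0)
  - u' ord0 * v' ord_max * (u ord_max * v ord0).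
pose P r := a * w r; pose Q r := b * w' r.
have det_slice r : x (ord0, ord0, r) * x (ord_max, ord_max, r)
    - x (ord0, ord_max, r) * x (ord_max, ord0, r) = P r * Q r * D.
  by rewrite !E /D /P /Q; ring.
have det_mixed : x (ord0, ord0, k) * x (ord_max, ord_max, l)
    + x (ord0, ord0, l) * x (ord_max, ord_max, k)
    - x (ord0, ord_max, k) * x (ord_max, ord0, l)
    - x (ord0, ord_max, l) * x (ord_max, ord0, k) = (P k * Q l + P l * Q k) * D.
  by rewrite !E /D /P /Q; ring.
have det_k : s * x (ord0, ord0, k) ^+ 2 = P k * Q k * D.
  by rewrite -det_slice x10k x11k; ring.
have det_l : s * x (ord0, ord0, l) ^+ 2 = P l * Q l * D.
  by rewrite -det_slice x10l x11l; ring.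
have det_kl : s * 2 * x (ord0, ord0, k) * x (ord0, ord0, l) = (P k * Q l + P l * Q k) * D.
  by rewrite -det_mixed x10k x11k x10l x11l; ring.
have : ((P k * Q l - P l * Q k) * D) ^+ 2 = 0.
  transitivity (((P k * Q l + P l * Q k) * D) ^+ 2 - 4%:R * (P k * Q k * D) * (P l * Q l * D)).
    by ring.
  by rewrite -det_k -det_l -det_kl; ring.
move/eqP; rewrite expf_eq0 /= mulf_eq0 => /orP[/eqP PQ_dep | /eqP D0].
  apply/eqP; rewrite -subr_eq0; apply/eqP.
  transitivity ((P k * Q l - P l * Q k) * (u ord0 * v ord0 * (u' ord0 * v' ord_max)
    - u' ord0 * v' ord0 * (u ord0 * v ord_max))); first by rewrite !E /P /Q; ring.
  by rewrite PQ_dep mul0r.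
have sq0 h : s * h ^+ 2 = 0 -> h = 0.
  by move/eqP; rewrite mulf_eq0 (negbTE s_nz) expf_eq0 /= => /eqP.
have x00k : x (ord0, ord0, k) = 0 by apply: sq0; rewrite det_k D0 mulr0.
have x00l : x (ord0, ord0, l) = 0 by apply: sq0; rewrite det_l D0 mulr0.
by rewrite x00k x00l !mul0r.
Qed.

Definition jordan2 (s a b : CC) (i j : 'I_2) : CC :=
  match val i, val j with 0, 0 => a | 0, _ => b | _, 0 => 0 | _, _ => s * a end.

(* [jpencil s c e] is c (x) [[1, 0], [0, s]] + e (x) [[0, 1], [0, 0]]. *)
Definition jpencil s (c e : {poly CC}) : tens m :=
  [ffun z : tidx m => jordan2 s c`_z.2 e`_z.2 z.1.1 z.1.2].

Lemma jpencil_secant_limit s c e (k : 'I_m.+1) :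
  s != 0 -> e`_k != 0 -> secant_limit (jpencil s c e).
Proof.
move=> s_nz e_nz.
pose g (r : 'I_m.+1) : {poly CC} := (c`_r)%:P + (e`_r / s)%:P * 'X.
exists (fun z => match val z.1.1, val z.1.2 with
  | 0, 0 => g z.2 | 0, _ => (e`_z.2)%:P | _, 0 => 'X * g z.2 | _, _ => s%:P * g z.2 end).
split=> [[[i j] r] | t t_nz].
  by rewrite ffunE; case: i j => [[|[|?]] ?] [[|[|?]] ?] //=; rewrite !hornerE.
pose vec2 a0 a1 (i : 'I_2) : CC := if val i == 0%N then a0 else a1.
apply: (@sec_locus_pure2 _ t^-1 (- (s / t)) (vec2 1 t) (vec2 t s) (fun r => (g r).[t])
   (vec2 1 0) (vec2 0 1) (fun r => c`_r)).
  by apply/eqP => /ffunP /(_ (ord0, ord_max, k)); rewrite !ffunE /= hornerC; apply/eqP.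
apply/ffunP => -[[i j] r]; rewrite !ffunE.
case: i j => [[|[|?]] ?] [[|[|?]] ?] //=; rewrite /g /vec2 !hornerE /GRing.scale /=.
all: by field; rewrite ?t_nz ?s_nz.
Qed.

Lemma jpencil_not_sec_locus s c e (k l : 'I_m.+1) :
  s != 0 -> c`_k * e`_l != c`_l * e`_k -> ~ sec_locus (jpencil s c e).
Proof.
move=> s_nz ce_indep [_ [_ [_ [[_ [u [v [w ->]]]] [[_ [u' [v' [w' ->]]]] [a [b ex]]]]]]].
have := rank2_jordan_slices (k := k) (l := l) ex s_nz.
by rewrite !ffunE /= => /(_ erefl erefl erefl erefl); apply/eqP.
Qed.

Lemma jpencil_shift_boundary s n c : s != 0 -> (0 < n)%N -> c != 0 ->
  (size c + n <= m.+1)%N ->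
  secant_limit (jpencil s c (c * 'X^n)) /\ ~ sec_locus (jpencil s c (c * 'X^n)).
Proof.
move=> s_nz n_gt0 c_nz size_c.
have size_p : size c = (size c).-1.+1 by rewrite prednK // size_poly_gt0.
set p := (size c).-1 in size_p.
have c_top : c`_p != 0 by rewrite -lead_coefE lead_coef_eq0.
have lt_pn : (p + n < m.+1)%N by rewrite -addSn -size_p.
have lt_p : (p < m.+1)%N by rewrite (leq_ltn_trans (leq_addr n p)).
have shift_top : (c * 'X^n)`_(p + n) = c`_p by rewrite coefMXn ltnNge leq_addl addnK.
have c_pn : c`_(p + n) = 0 by rewrite nth_default // size_p -addn1 leq_add2l.
split; first by apply: (jpencil_secant_limit c (k := Ordinal lt_pn) s_nz); rewrite /= shift_top.
apply: (jpencil_not_sec_locus (k := Ordinal lt_p) (l := Ordinal lt_pn)) => //=.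
by rewrite shift_top c_pn mul0r mulf_neq0.
Qed.

Lemma jpencil_linear s a c c' e e' :
  jpencil s (a *: c + c') (a *: e + e') = a *: jpencil s c e + jpencil s c' e'.
Proof.
apply/ffunP => -[[i j] k]; rewrite !ffunE !coefD !coefZ /GRing.scale /=.
by case: i j => [[|[|?]] ?] [[|[|?]] ?] //=; rewrite /jordan2 /=; ring.
Qed.

Lemma jpencil_eq0 s c e : (size c <= m.+1)%N -> jpencil s c e = 0 -> c = 0.
Proof.
move=> size_c /ffunP jz; apply/polyP => k; rewrite coef0.
case: (ltnP k m.+1) => [lt_k | /(leq_trans size_c) ?]; last by rewrite nth_default.
by have := jz (ord0, ord0, Ordinal lt_k); rewrite !ffunE.
Qed.

End SecantLoci.

Lemma size_sum_scaleXn N (a : 'I_N -> CC) : (size (\sum_(i < N) a i *: 'X^i)%R <= N)%N.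
Proof.
apply: (leq_trans (size_sum _ _ _)); apply/bigmax_leqP => i _.
by rewrite (leq_trans (size_scale_leq _ _)) // size_polyXn.
Qed.

Section PolynomialSpans.
Variables (m : nat) (T : {linear {poly CC} -> tens m}).
Implicit Types p : {poly CC}.

Definition polyspan N : {vspace tens m} := <<[tuple T 'X^i | i < N]>>%VS.

Lemma lin_sum_scaleXn N (a : 'I_N -> CC) :
  T (\sum_(i < N) a i *: 'X^i) = \sum_(i < N) a i *: [tuple T 'X^i | i < N]`_i.
Proof. by rewrite linear_sum; apply: eq_bigr => i _; rewrite linearZ nth_mktuple. Qed.

Lemma polyspanP N x : x \in polyspan N <-> exists2 p : {poly CC}, (size p <= N)%N & x = T p.
Proof.
split=> [/coord_span -> | [p size_p ->]].
  by exists (\sum_(i < N) coord [tuple T 'X^i | i < N] i x *: 'X^i);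
    rewrite ?size_sum_scaleXn ?lin_sum_scaleXn.
have -> : p = \sum_(i < N) p`_i *: 'X^i.
  rewrite -poly_def; apply/polyP => i; rewrite coef_poly.
  by case: ltnP => // /(leq_trans size_p) /leq_sizeP ->.
rewrite lin_sum_scaleXn; apply: rpred_sum => i _; apply/rpredZ/memv_span.
by rewrite nth_mktuple -(tnth_mktuple (fun i : 'I_N => T 'X^i)) mem_tnth.
Qed.

Lemma dim_polyspan N : (N <= m.+1)%N ->
  (forall p, (size p <= m.+1)%N -> T p = 0 -> p = 0) -> \dim (polyspan N) = N.
Proof.
move=> le_N T_inj; have /eqP : free [tuple T 'X^i | i < N].
  apply/freeP => a; rewrite -lin_sum_scaleXn.
  move=> /(T_inj _ (leq_trans (size_sum_scaleXn a) le_N)) /polyP a0 i.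
  by have := a0 i; rewrite coef0 coef_sumMXn (big_pred1 i).
by rewrite size_tuple.
Qed.

End PolynomialSpans.

Definition pencil1 m (p : {poly CC}) : tens m := jpencil m 1 p (p * 'X).
Definition pencil2 m (p : {poly CC}) : tens m := swap12 (jpencil m (-1) p (p * 'X^2)).

Fact pencil1_is_linear m : linear (@pencil1 m).
Proof. by move=> a p q; rewrite /pencil1 mulrDl -scalerAl jpencil_linear. Qed.

Fact pencil2_is_linear m : linear (@pencil2 m).
Proof. by move=> a p q; rewrite /pencil2 mulrDl -scalerAl jpencil_linear linearP. Qed.

HB.instance Definition _ m :=
  GRing.isLinear.Build CC {poly CC} (tens m) *:%R (@pencil1 m) (@pencil1_is_linear m).
HB.instance Definition _ m :=
  GRing.isLinear.Build CC {poly CC} (tens m) *:%R (@pencil2 m) (@pencil2_is_linear m).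

Section Construction.
Variable m : nat.
Implicit Types (x : tens m) (c d : {poly CC}).

Definition W1 : {vspace tens m} := polyspan (@pencil1 m) m.
Definition W2 : {vspace tens m} := polyspan (@pencil2 m) m.-1.

Lemma dim_W1 : \dim W1 = m.
Proof. by apply: dim_polyspan => // p size_p; apply: jpencil_eq0. Qed.

Lemma dim_W2 : \dim W2 = m.-1.
Proof.
apply: dim_polyspan => [|p size_p]; first exact: leq_trans (leq_pred m) (leqnSn m).
by rewrite /pencil2 -(raddf0 (@swap12 m)) => /(can_inj (@swap12K m)) /jpencil_eq0; apply.
Qed.

Lemma W1_boundary x : x != 0 -> x \in W1 -> sec_var x /\ ~ sec_locus x.
Proof.
move=> x_nz /polyspanP [c size_c def_x]; subst x.
have c_nz : c != 0 by apply: contraNneq x_nz => ->; rewrite linear0.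
have [|lim nsec] := jpencil_shift_boundary (m := m) (oner_neq0 _) (isT : 0 < 1)%N c_nz.
  by rewrite addn1.
by split=> //; apply: sec_var_secant_limit.
Qed.

Lemma W2_boundary x : x != 0 -> x \in W2 -> sec_var x /\ ~ sec_locus x.
Proof.
move=> x_nz /polyspanP [d size_d def_x]; subst x.
have d_nz : d != 0 by apply: contraNneq x_nz => ->; rewrite linear0.
have [||lim nsec] := jpencil_shift_boundary (m := m) (s := -1) _ (isT : 0 < 2)%N d_nz.
- by rewrite oppr_eq0 oner_eq0.
- by have := size_poly_gt0 d; rewrite d_nz; lia.
split; first exact/sec_var_secant_limit/secant_limit_swap12.
by move/sec_locus_swap12; rewrite swap12K.
Qed.

Lemma contract_pencils c d k : (k <= m)%N ->
  let x := pencil1 m c + pencil2 m d in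
  [/\ contract (jordan2 1 2^-1 0) x k = c`_k,
      contract (jordan2 (-1) 2^-1 0) x k = d`_k,
      contract (jordan2 0 0 1) x k = (c * 'X)`_k
    & contract (fun i j => jordan2 0 0 1 j i) x k = (d * 'X^2)`_k].
Proof.
move=> le_km x; have two_nz : (2 : CC) != 0 by rewrite pnatr_eq0.
rewrite /x /contract /pencil1 /pencil2 !big_ord_recl !big_ord0 !ffunE /= inordK //.
by rewrite /jordan2 /=; split; field.
Qed.

Lemma pencil_sum_not_sec_var c d : c != 0 -> d != 0 ->
  (size c <= m)%N -> (size d < m)%N -> ~ sec_var (pencil1 m c + pencil2 m d).
Proof.
move=> c_nz d_nz size_c size_d.
have size_cX : size (c * 'X) = (size c).+1 := size_mulX c_nz.
have size_dX2 : size (d * 'X^2) = (size d).+2 := size_mulXn 2 d_nz.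
have c_gt0 : (0 < size c)%N by rewrite size_poly_gt0.
have d_gt0 : (0 < size d)%N by rewrite size_poly_gt0.
have [lt_dc | le_cd] := ltnP (size d) (size c).
  eapply (not_sec_var_degrees (f0 := d) (f1 := c) (f2 := c * 'X)).
  - by move=> k /(contract_pencils c d)[? ? ? ?]; split; eassumption.
  - by rewrite d_gt0.
  - rewrite size_cX; apply/andP; split; lia.
have [lt_cXd | le_dcX] := ltnP (size c).+1 (size d).
  eapply (not_sec_var_degrees (f0 := c) (f1 := c * 'X) (f2 := d)).
  - by move=> k /(contract_pencils c d)[? ? ? ?]; split; eassumption.
  - rewrite size_cX; apply/andP; split; lia.
  - rewrite size_cX; apply/andP; split; lia.
eapply (not_sec_var_degrees (f0 := c) (f1 := c * 'X) (f2 := d * 'X^2)).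
- by move=> k /(contract_pencils c d)[? ? ? ?]; split; eassumption.
- rewrite size_cX; apply/andP; split; lia.
- rewrite size_cX size_dX2; apply/andP; split; lia.
Qed.

Lemma capv_W1W2 : (W1 :&: W2 = 0)%VS.
Proof.
apply/eqP; rewrite -subv0; apply/subvP => _ /memv_capP[/polyspanP[c size_c ->]].
move=> /polyspanP[d _ pencils_eq]; suff -> : c = 0 by rewrite linear0 memv0.
apply/polyP => k; rewrite coef0; case: (ltnP k m) => [lt_km | /(leq_trans size_c) ?].
  have := congr1 (fun y : tens m => y (ord0, ord_max, inord k.+1)) pencils_eq.
  by rewrite /pencil1 /pencil2 !ffunE /= inordK // coefMX /jordan2.
by rewrite nth_default.
Qed.

Lemma addv_W1W2_not_sec_var x :
  x \in (W1 + W2)%VS -> x \notin W1 -> x \notin W2 -> ~ sec_var x.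
Proof.
move=> /memv_addP[_ /polyspanP[c size_c ->] [_ /polyspanP[d size_d ->] ->]] n1 n2.
have c_nz : c != 0.
  by apply: contraNneq n2 => ->; rewrite linear0 add0r; apply/polyspanP; exists d.
have d_nz : d != 0.
  by apply: contraNneq n1 => ->; rewrite linear0 addr0; apply/polyspanP; exists c.
apply: pencil_sum_not_sec_var => //.
by have := size_poly_gt0 d; rewrite d_nz; lia.
Qed.

Lemma addv_W1W2_not_sec_locus x : x \in (W1 + W2)%VS -> ~ sec_locus x.
Proof.
move=> xW sx; have x_nz : x != 0 by case: sx.
have [x1 | n1] := boolP (x \in W1); first exact: (W1_boundary x_nz x1).2.
have [x2 | n2] := boolP (x \in W2); first exact: (W2_boundary x_nz x2).2.
exact/(addv_W1W2_not_sec_var xW n1 n2)/sec_locus_sec_var.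
Qed.

Lemma addv_W1W2_sec_var x : x \in (W1 + W2)%VS ->
  (sec_var x <-> x != 0 /\ (x \in W1 \/ x \in W2)).
Proof.
move=> xW; split=> [sx | [x_nz [x1 | x2]]].
- split; first by case: sx.
  have [x1 | n1] := boolP (x \in W1); first by left.
  have [x2 | n2] := boolP (x \in W2); first by right.
  by case: (addv_W1W2_not_sec_var xW n1 n2).
- exact: (W1_boundary x_nz x1).1.
- exact: (W2_boundary x_nz x2).1.
Qed.

End Construction.

Lemma dim_tens m : \dim (fullv : {vspace tens m}) = (4 * m.+1)%N.
Proof. by rewrite dimvf /dim /= !card_prod !card_ord muln1. Qed.

Theorem theorem4p7 (m : nat) (hm : (0 < m)%N) :
  exists W : {vspace tens m},
    (\dim W + (2 * m + 5) = \dim (fullv : {vspace tens m}))%N /\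
    (forall x : tens m, x \in W -> ~ sec_locus x) /\
    exists W1 W2 : {vspace tens m},
      (W1 :&: W2 = 0)%VS /\
      (W1 + W2 = W)%VS /\
      (forall x : tens m, x != 0 -> x \in W1 -> sec_var x /\ ~ sec_locus x) /\
      (forall x : tens m, x != 0 -> x \in W2 -> sec_var x /\ ~ sec_locus x) /\
      (forall x : tens m, x \in W -> (sec_var x <-> x != 0 /\ (x \in W1 \/ x \in W2))).
Proof.
exists (W1 m + W2 m)%VS; split.
  have := dimv_sum_cap (W1 m) (W2 m).
  rewrite capv_W1W2 dimv0 addn0 dim_W1 dim_W2 => ->; rewrite dim_tens; lia.
split; first exact: addv_W1W2_not_sec_locus.
exists (W1 m), (W2 m); split; first exact: capv_W1W2.
split=> //; split; first exact: W1_boundary.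
by split; [exact: W2_boundary | exact: addv_W1W2_sec_var].
Qed.
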